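(* Let $L_n$ and $PL_n$ be as in the context. Then (1) $PL_n$ is a subgroup of the commutator subgroup $L_n'$ for all $n\ge 2$; and (2) $PL_n$ is not a characteristic subgroup of $L_n$ for $n\ge 4$.
   Context: For $n\ge 2$, $L_n=\langle y_1,\dots,y_{n-1}\mid y_j^2=1\ (1\le j\le n-1),\ y_iy_{i+1}y_i=y_{i+1}y_iy_{i+1}\ (1\le i\le n-2)\rangle$ (no relations between $y_i,y_j$ with $|i-j|\ge 2$). Let $\pi:L_n\to S_n$ be the surjective homomorphism with $\pi(y_i)=(i\ i{+}1)$, the transposition, and $PL_n=\ker\pi$. *)

(* The finitely presented group L_n is modelled by words in
   the generators (letter i stands for y_{i+1}, 0 <= i <= n-2) modulo the
   congruence generated by the defining relations. Since every generator is
   an involution, the inverse of a word is its reversal. *)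
From mathcomp Require Import all_boot all_fingroup.
Set Implicit Arguments. Unset Strict Implicit. Unset Printing Implicit Defensive.

Definition word := seq nat.

Definition valid (n : nat) (w : word) : bool := all (fun i => i.+1 < n) w.

Inductive req (n : nat) : word -> word -> Prop :=
| req_refl w : valid n w -> req n w w
| req_sym u v : req n u v -> req n v u
| req_trans u v w : req n u v -> req n v w -> req n u w
| req_cat u u' v v' : req n u u' -> req n v v' -> req n (u ++ v) (u' ++ v')
| req_inv j : j.+1 < n -> req n [:: j; j] [::]
| req_braid i : i.+2 < n -> req n [:: i; i.+1; i] [:: i.+1; i; i.+1].

Definition tp (n i : nat) : {perm 'I_n} :=
  match @insub _ (fun k => k < n) 'I_n i, @insub _ (fun k => k < n) 'I_n i.+1 with
  | Some a, Some b => tperm a b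
  | _, _ => 1%g
  end.

Definition piw (n : nat) (w : word) : {perm 'I_n} :=
  foldr (fun i s => (tp n i * s)%g) 1%g w.

Definition inPL (n : nat) (w : word) : Prop := req n w w /\ piw n w = 1%g.

Definition commw (u v : word) : word := rev u ++ rev v ++ u ++ v.

Definition in_derived (n : nat) (w : word) : Prop :=
  exists cs : seq (word * word),
    all (fun p => valid n p.1 && valid n p.2) cs /\
    req n w (flatten [seq commw p.1 p.2 | p <- cs]).

Definition ext (f : nat -> word) (w : word) : word := flatten (map f w).

Definition is_endo (n : nat) (f : nat -> word) : Prop :=
  forall u v, req n u v -> req n (ext f u) (ext f v).

Definition is_auto (n : nat) (f : nat -> word) : Prop :=
  is_endo n f /\ exists g, is_endo n g /\
    forall w, req n w w -> req n (ext g (ext f w)) w /\ req n (ext f (ext g w)) w.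

Definition PL_characteristic (n : nat) : Prop :=
  forall f, is_auto n f ->
    forall x, inPL n x <-> exists w, inPL n w /\ req n (ext f w) x.

From mathcomp Require Import all_boot all_fingroup zify.

Set Implicit Arguments.
Unset Strict Implicit.
Unset Printing Implicit Defensive.

(* (1) The map pi is well defined on L_n and every generator goes to a
   transposition, so the sign of pi(w) is the parity of the length of w; hence
   every word of PL_n has even length.  All generators are conjugate (each is
   conjugate to y_1 through the braid relations), and since they are
   involutions, y_b = c^-1 y_a c gives y_a y_b = [y_a, c].  Cutting a word of
   even length into consecutive pairs writes it as a product of commutators.

   (2) The assignment y_1 |-> y_2 y_1 y_2, y_j |-> y_j (j >= 2) respects the
   defining relations and is its own inverse, hence is an automorphism phi of
   L_n.  For n >= 4 the element (y_1 y_3)^2 lies in PL_n, while pi maps its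
   image y_2y_1y_2y_3y_2y_1y_2y_3 to a permutation moving the point 1, so
   phi(PL_n) <> PL_n.

   Letters of words are 0-based: letter i stands for y_(i+1). *)

Definition swap (i k : nat) : nat :=
  if k == i then i.+1 else if k == i.+1 then i else k.

Lemma swapK i : involutive (swap i).
Proof. by move=> k; rewrite /swap; do !case: eqP; lia. Qed.

Lemma swap_braid i k :
  swap i (swap i.+1 (swap i k)) = swap i.+1 (swap i (swap i.+1 k)).
Proof. by rewrite /swap; do !case: eqP; lia. Qed.

Lemma tpE n i (x : 'I_n) : i.+1 < n -> val (tp n i x) = swap i (val x).
Proof.
move=> lt_i1n; rewrite /tp.
case: insubP => [a _ va|]; last by rewrite ltnW.
case: insubP => [b _ vb|]; last by rewrite lt_i1n.
case: tpermP => [->|->|xa xb]; rewrite /swap ?va ?vb ?eqxx //.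
  by case: eqP => //; lia.
have /negbTE-> : val x != i by rewrite -va; apply/eqP => /val_inj.
by have /negbTE-> : val x != i.+1 by rewrite -vb; apply/eqP => /val_inj.
Qed.

Lemma odd_tp n i : i.+1 < n -> odd_perm (tp n i).
Proof.
move=> lt_i1n; rewrite /tp.
case: insubP => [a _ va|]; last by rewrite ltnW.
case: insubP => [b _ vb|]; last by rewrite lt_i1n.
by rewrite odd_tperm; apply/eqP => /(congr1 val); rewrite va vb; lia.
Qed.

Lemma valid_cat n u v : valid n (u ++ v) = valid n u && valid n v.
Proof. exact: all_cat. Qed.

Lemma valid_rev n w : valid n (rev w) = valid n w.
Proof. exact: all_rev. Qed.

Lemma piw_cat n u v : piw n (u ++ v) = (piw n u * piw n v)%g.
Proof. by elim: u => [|a u IH] /=; rewrite ?mul1g // IH mulgA. Qed.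

Lemma piwE n w (x : 'I_n) : valid n w ->
  val (piw n w x) = foldl (fun k i => swap i k) (val x) w.
Proof.
elim: w x => [|a w IH] x /=; first by rewrite perm1.
by move=> /andP[lt_a1n vw]; rewrite permM IH // tpE.
Qed.

Lemma req_valid n u v : req n u v -> valid n u /\ valid n v.
Proof.
elim=> {u v} [w vw //|u v _ [] //|u v w _ [vu _] _ [_ vw] //|
              u u' v v' _ [vu vu'] _ [vv vv']|j lt_j1n|i lt_i2n].
- by rewrite !valid_cat vu vu' vv vv'.
- by rewrite /valid /=; lia.
- by rewrite /valid /=; lia.
Qed.

Lemma req_piw n u v : req n u v -> piw n u = piw n v.
Proof.
elim=> {u v} [//|u v _ -> //|u v w _ -> _ -> //|u u' v v' _ ru _ rv|j lt_j1n|i lt_i2n].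
- by rewrite !piw_cat ru rv.
- apply/permP => x; apply: val_inj.
  by rewrite piwE /= ?swapK ?perm1 // /valid /= lt_j1n.
- apply/permP => x; apply: val_inj.
  by rewrite !piwE /= ?swap_braid // /valid /=; lia.
Qed.

Lemma odd_piw n w : valid n w -> odd_perm (piw n w) = odd (size w).
Proof.
elim: w => [|a w IH] /=; first by rewrite odd_perm1.
by move=> /andP[lt_a1n vw]; rewrite odd_permM odd_tp // IH.
Qed.

Lemma inPL_even n w : inPL n w -> ~~ odd (size w).
Proof.
move=> [rww piw1]; have [vw _] := req_valid rww.
by rewrite -(odd_piw vw) piw1 odd_perm1.
Qed.

Lemma req_mid n u x y v : valid n u -> valid n v -> req n x y ->
  req n (u ++ x ++ v) (u ++ y ++ v).
Proof. by move=> vu vv rxy; do !apply: req_cat => //; apply: req_refl. Qed.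

(* Since the generators are involutions, the reversal of a word is its inverse. *)
Lemma req_rev_cat n g : valid n g -> req n (rev g ++ g) [::].
Proof.
elim: g => [|a g IH] /=; first by move=> _; apply: req_refl.
move=> /andP[lt_a1n vg]; rewrite rev_cons cat_rcons.
apply: (req_trans (v := rev g ++ [::] ++ g)); last exact: IH.
by apply: (@req_mid n _ [:: a; a]); rewrite ?valid_rev //; apply: req_inv.
Qed.

Lemma req_cat_rev n g : valid n g -> req n (g ++ rev g) [::].
Proof. by move=> vg; have := @req_rev_cat n (rev g); rewrite revK valid_rev; apply. Qed.

Lemma req_conj_inv n g x y : valid n g -> valid n x ->
  req n y (g ++ x ++ rev g) -> req n x (rev g ++ y ++ g).
Proof.
move=> vg vx ryx; have [vy _] := req_valid ryx.
have rx : req n ((rev g ++ g) ++ x ++ (rev g ++ g)) ([::] ++ x ++ [::]).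
  exact: req_cat (req_rev_cat vg) (req_cat (req_refl vx) (req_rev_cat vg)).
rewrite cats0 in rx; apply: req_trans (req_sym rx) _.
have -> : (rev g ++ g) ++ x ++ rev g ++ g = rev g ++ (g ++ x ++ rev g) ++ g.
  by rewrite -!catA.
by apply: req_mid (req_sym ryx); rewrite ?valid_rev.
Qed.

Lemma req_gen_succ n a : a.+2 < n ->
  req n [:: a.+1] ([:: a; a.+1] ++ [:: a] ++ [:: a.+1; a]).
Proof.
move=> lt_a2n; have lt_a1n : a.+1 < n by apply: ltnW.
apply: req_sym; apply: (req_trans (v := [:: a] ++ [:: a; a.+1; a] ++ [:: a])).
  apply: (@req_mid n [:: a] [:: a.+1; a; a.+1]); rewrite /valid /= ?lt_a1n //.
  exact/req_sym/req_braid.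
apply: (@req_cat n [:: a; a] [::] ([:: a.+1] ++ [:: a; a]) ([:: a.+1] ++ [::])).
  exact: req_inv.
by apply: req_cat; [apply: req_refl; rewrite /valid /= lt_a2n | apply: req_inv].
Qed.

Lemma gen_conj0 n a : a.+1 < n ->
  exists2 g, valid n g & req n [:: a] (g ++ [:: 0] ++ rev g).
Proof.
elim: a => [|a IH] lt_a1n.
  by exists [::] => //; apply: req_refl; rewrite /valid /= lt_a1n.
have [g vg rag] := IH (ltnW lt_a1n).
have vpre : valid n [:: a; a.+1] by rewrite /valid /=; lia.
exists ([:: a; a.+1] ++ g); first by rewrite valid_cat vpre.
apply: (req_trans (req_gen_succ lt_a1n)).
have -> : ([:: a; a.+1] ++ g) ++ [:: 0] ++ rev ([:: a; a.+1] ++ g) =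
          [:: a; a.+1] ++ (g ++ [:: 0] ++ rev g) ++ [:: a.+1; a].
  by rewrite rev_cat -!catA.
by apply: req_mid rag => //; rewrite /valid /=; lia.
Qed.

Lemma gen_conj n a b : a.+1 < n -> b.+1 < n ->
  exists2 c, valid n c & req n [:: b] (rev c ++ [:: a] ++ c).
Proof.
move=> lt_a1n lt_b1n.
have [g vg rag] := gen_conj0 lt_a1n; have [k vk rbk] := gen_conj0 lt_b1n.
have r0a : req n [:: 0] (rev g ++ [:: a] ++ g).
  by apply: req_conj_inv rag => //; rewrite /valid /=; lia.
exists (g ++ rev k); first by rewrite valid_cat vg valid_rev.
apply: (req_trans rbk).
have -> : rev (g ++ rev k) ++ [:: a] ++ g ++ rev k = k ++ (rev g ++ [:: a] ++ g) ++ rev k.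
  by rewrite rev_cat revK -!catA.
by apply: req_mid r0a; rewrite ?valid_rev.
Qed.

Lemma gen_pair_commutator n a b : a.+1 < n -> b.+1 < n ->
  exists2 c, valid n c & req n [:: a; b] (commw [:: a] c).
Proof.
move=> lt_a1n lt_b1n; have [c vc rbc] := gen_conj lt_a1n lt_b1n.
exists c => //; apply: (@req_cat n [:: a] [:: a]) rbc.
by apply: req_refl; rewrite /valid /= lt_a1n.
Qed.

Lemma in_derived_nil n : in_derived n [::].
Proof. by exists [::]; split => //; apply: req_refl. Qed.

Lemma in_derived_cat n u v :
  in_derived n u -> in_derived n v -> in_derived n (u ++ v).
Proof.
move=> [cs [vcs rucs]] [ds [vds rvds]]; exists (cs ++ ds).
by rewrite all_cat vcs vds map_cat flatten_cat; split => //; apply: req_cat.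
Qed.

Lemma even_in_derived n w : valid n w -> ~~ odd (size w) -> in_derived n w.
Proof.
move: {2}(size w) (leqnn (size w)) => m.
elim: m w => [|m IH] [|a [|b w]] //= size_w; try by move=> *; apply: in_derived_nil.
move=> /and3P[lt_a1n lt_b1n vw]; rewrite negbK => even_w.
rewrite -[a :: b :: w]/([:: a; b] ++ w); apply: in_derived_cat; last first.
  by apply: IH; rewrite // -ltnS ltnW.
have [c vc rab] := gen_pair_commutator lt_a1n lt_b1n.
by exists [:: ([:: a], c)]; rewrite /= vc cats0 /valid /= lt_a1n.
Qed.

Lemma PL_sub_derived n w : inPL n w -> in_derived n w.
Proof.
move=> PLw; have [vw _] := req_valid PLw.1.
exact: even_in_derived vw (inPL_even PLw).
Qed.

Definition phi (j : nat) : word := if j == 0 then [:: 1; 0; 1] else [:: j].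

Lemma ext_cat f u v : ext f (u ++ v) = ext f u ++ ext f v.
Proof. by rewrite /ext map_cat flatten_cat. Qed.

Lemma valid_ext_phi n w : 2 < n -> valid n w -> valid n (ext phi w).
Proof.
move=> lt_2n; elim: w => [|a w IH] //= /andP[lt_a1n vw].
rewrite -/(ext phi w) valid_cat IH // andbT /phi.
by case: eqP; rewrite /valid /=; lia.
Qed.

Section Phi.

Variable n : nat.
Hypothesis lt_2n : 2 < n.

Let v0 : valid n [:: 0]. Proof. by rewrite /valid /=; lia. Qed.
Let v1 : valid n [:: 1]. Proof. by rewrite /valid /=; lia. Qed.
Let r00 : req n [:: 0; 0] [::]. Proof. by apply: req_inv; lia. Qed.
Let r11 : req n [:: 1; 1] [::]. Proof. by apply: req_inv; lia. Qed.

Lemma phi_phi0 : req n ([:: 1] ++ [:: 1; 0; 1] ++ [:: 1]) [:: 0].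
Proof.
change (req n ([:: 1; 1] ++ [:: 0] ++ [:: 1; 1]) ([::] ++ [:: 0] ++ [::])).
exact: req_cat r11 (req_cat (req_refl v0) r11).
Qed.

Lemma phi0_1_phi0 : req n ([:: 1; 0; 1] ++ [:: 1] ++ [:: 1; 0; 1]) [:: 0].
Proof.
have v01 : valid n [:: 0; 1] by rewrite /valid /=; lia.
have v101 : valid n [:: 1; 0; 1] by rewrite /valid /=; lia.
apply: (@req_trans n _ ([:: 1; 0] ++ [::] ++ [:: 1; 0; 1])).
  by apply: (@req_mid n [:: 1; 0] [:: 1; 1]) => //; rewrite /valid /=; lia.
apply: (@req_trans n _ ([::] ++ [:: 0; 1; 0] ++ [:: 0; 1])).
  by apply: (@req_mid n [::] [:: 1; 0; 1]) => //; apply/req_sym/req_braid.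
apply: (@req_trans n _ ([:: 0; 1] ++ [::] ++ [:: 1])).
  exact: (@req_mid n [:: 0; 1] [:: 0; 0]).
exact: (@req_mid n [:: 0] [:: 1; 1] [::] [::]).
Qed.

(* phi respects the defining relations, hence is an endomorphism: the only
   relations it changes are y_1^2 = 1 and y_1 y_2 y_1 = y_2 y_1 y_2, whose two
   sides are both sent to 1, resp. both to y_1. *)
Lemma endo_phi : is_endo n phi.
Proof.
move=> u v; elim=> {u v} [w vw|u v _|u v w _ r1 _ r2|u u' v v' _ r1 _ r2|j lt_j1n|i lt_i2n].
- by apply: req_refl; apply: valid_ext_phi.
- exact: req_sym.
- exact: req_trans r1 r2.
- by rewrite !ext_cat; apply: req_cat.
- case: j lt_j1n => [|j] lt_j1n; last exact: req_inv.
  by apply: (req_cat_rev (g := [:: 1; 0; 1])); rewrite /valid /=; lia.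
- case: i lt_i2n => [|i] lt_i2n; last exact: req_braid.
  exact: req_trans phi0_1_phi0 (req_sym phi_phi0).
Qed.

Lemma phi_invol w : valid n w -> req n (ext phi (ext phi w)) w.
Proof.
elim: w => [|a w IH] /=; first by move=> _; apply: req_refl.
move=> /andP[lt_a1n vw]; rewrite -/(ext phi w) ext_cat.
apply: (@req_cat n _ [:: a] _ w); last exact: IH.
by case: a lt_a1n => [|a] lt_a1n; [apply: phi_phi0 | apply: req_refl; rewrite /valid /=; lia].
Qed.

Lemma auto_phi : is_auto n phi.
Proof.
split; first exact: endo_phi.
exists phi; split; first exact: endo_phi.
by move=> w /req_valid[vw _]; split; apply: phi_invol.
Qed.

End Phi.

Definition witness : word := [:: 0; 2; 0; 2].

Lemma valid_witness n : 3 < n -> valid n witness.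
Proof. by rewrite /valid /=; lia. Qed.

(* y_1 and y_3 map to commuting transpositions, so (y_1 y_3)^2 lies in PL_n. *)
Lemma witness_in_PL n : 3 < n -> inPL n witness.
Proof.
move=> lt_3n; split; first exact/req_refl/valid_witness.
apply/permP => x; apply: val_inj; rewrite piwE ?valid_witness // perm1 /=.
by case: (val x) => [|[|[|[|k]]]].
Qed.

Lemma phi_witness_notin_PL n : 3 < n -> ~ inPL n (ext phi witness).
Proof.
move=> lt_3n; have lt_0n : 0 < n by apply: leq_trans lt_3n.
move=> [_ /(congr1 (fun s : {perm 'I_n} => val (s (Ordinal lt_0n))))].
by rewrite piwE ?perm1 ?valid_ext_phi ?valid_witness // ltnW.
Qed.

Lemma PL_not_characteristic n : 3 < n -> ~ PL_characteristic n.
Proof.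
move=> lt_3n PL_char; have lt_2n : 2 < n by apply: ltnW.
apply: (phi_witness_notin_PL lt_3n).
apply: (PL_char phi (auto_phi lt_2n) _).2; exists witness; split.
- exact: witness_in_PL.
- exact/req_refl/valid_ext_phi/valid_witness.
Qed.

Theorem proposition5p1 :
  (forall n : nat, 2 <= n -> forall w : word, inPL n w -> in_derived n w) /\
  (forall n : nat, 4 <= n -> ~ PL_characteristic n).
Proof.
split.
- by move=> n _; apply: PL_sub_derived.
- exact: PL_not_characteristic.
Qed.
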